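(* Let $S,M\subseteq X$ be disjoint, let $T\ge2$ be an even integer, and let $y=(y_0,y_1,\dots)$ be an infinite sequence in $X$ such that $y_0\in S$, $\mathrm{ct}\le T$, and $S_y[0,\mathrm{ht}]=1$. Set $r_S=T/2$. Then there exists $r_M\in R=\{1,2,4,\dots,2^{\lceil\log_2(14T)\rceil}\}$ such that, for $r=(r_S,r_M)$, \[ M_y^{(r)}[0,2T]\ge T/2\qquad\text{and}\qquad S_y^{(r)}[7T,15T]\ge T/4. \]
   Context: For a sequence $y$: $\mathrm{ht}=\min\{i\ge0:y_i\in M\}$ and $\mathrm{ct}=\min\{i>\mathrm{ht}:y_i\in S\}$. For positive integers $r=(r_S,r_M)$, $\gamma^{(r)}$ is the sequence obtained from $y$ by replacing each entry lying in $S$ by $r_S$ consecutive copies of it and each entry lying in $M$ by $r_M$ consecutive copies (other entries unchanged), indexed from $0$. For integers $a<b$, $M_y^{(r)}[a,b]=|\{t\in\{a,\dots,b\}:\gamma^{(r)}_t\in M\}|$ and $S_y^{(r)}[a,b]=|\{t\in\{a,\dots,b\}:\gamma^{(r)}_t\in S\}|$; when $r=(1,1)$ the superscript is omitted (so $\gamma^{(1,1)}=y$). *)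

From mathcomp Require Import all_boot.
Set Implicit Arguments. Unset Strict Implicit. Unset Printing Implicit Defensive.

Section Defs.
Variables (X : Type) (S M : pred X).

Definition is_ht (y : nat -> X) (h : nat) : Prop :=
  M (y h) /\ forall i, i < h -> ~~ M (y i).

Definition is_ct (y : nat -> X) (h c : nat) : Prop :=
  h < c /\ S (y c) /\ forall i, h < i -> i < c -> ~~ S (y i).

(* multiplicity of an entry: r_S if in S, r_M if in M, 1 otherwise *)
Definition wt (rS rM : nat) (x : X) : nat :=
  if S x then rS else if M x then rM else 1.

(* starting position in gamma^(r) of the block of copies of y_k *)
Definition blockpos (rS rM : nat) (y : nat -> X) (k : nat) : nat :=
  \sum_(j < k) wt rS rM (y j).

(* index k of y whose block contains position t (largest k with blockpos k <= t;
   k <= t since all weights are >= 1 for positive rS, rM) *)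
Definition gidx (rS rM : nat) (y : nat -> X) (t : nat) : nat :=
  \max_(k < t.+1 | blockpos rS rM y k <= t) (k : nat).

Definition gamma (rS rM : nat) (y : nat -> X) (t : nat) : X :=
  y (gidx rS rM y t).

Definition Mcount (rS rM : nat) (y : nat -> X) (a b : nat) : nat :=
  \sum_(a <= t < b.+1) (M (gamma rS rM y t) : nat).
Definition Scount (rS rM : nat) (y : nat -> X) (a b : nat) : nat :=
  \sum_(a <= t < b.+1) (S (gamma rS rM y t) : nat).

End Defs.

From Pilot Require Import Defs.
From mathcomp Require Import all_boot.
From mathcomp Require Import zify.
Set Implicit Arguments. Unset Strict Implicit. Unset Printing Implicit Defensive.

(* Let c = ct and let Q(k) be the position in gamma^(T/2, 2^k) at which the block of
   y_c starts.  Before c only y_0 lies in S, so Q(k) <= T/2 + (c - 1) 2^k, and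
   Q(k+1) <= 2 Q(k); the M-entry y_ht makes Q(k) >= 2^k.  Hence the first k with
   Q(k) >= 7T has Q(k) < 14T, which bounds 2^k.  For that k the prefix [0, Q(k))
   contains at most T/2 + c - 1 entries outside M, and the T/2 copies of y_c start
   inside [7T, 15T]. *)

Lemma leq_sum_nat_subrange (F : nat -> nat) {a b a' b'} :
  a <= a' -> a' <= b' -> b' <= b ->
  \sum_(a' <= i < b') F i <= \sum_(a <= i < b) F i.
Proof.
move=> le_aa' le_a'b' le_b'b.
rewrite (@big_cat_nat _ _ _ a' a b) ?(leq_trans le_a'b') //.
rewrite (@big_cat_nat _ _ _ b' a' b) //.
exact: leq_trans (leq_addr _ _) (leq_addl _ _).
Qed.

Lemma leq_sum_ord_tail (F : nat -> nat) n m :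
  (forall j, 0 < j < n -> F j <= m) -> \sum_(j < n) F j <= F 0 + n.-1 * m.
Proof.
case: n => [|n] F_le; first by rewrite big_ord0.
rewrite big_ord_recl leq_add2l -[n in n * m]card_ord -sum_nat_const.
by apply: leq_sum => j _; apply: F_le; rewrite ltn_ord andbT.
Qed.

Section Blocks.
Variables (X : Type) (S M : pred X) (rS rM : nat) (y : nat -> X).

Local Notation wt := (wt S M rS rM).
Local Notation blockpos := (blockpos S M rS rM y).
Local Notation gamma := (gamma S M rS rM y).

Lemma blockposS k : blockpos k.+1 = blockpos k + wt (y k).
Proof. by rewrite /blockpos big_ord_recr. Qed.

Lemma leq_blockpos {i j} : i <= j -> blockpos i <= blockpos j.
Proof.
move=> /subnKC <-; elim: (j - i) => [|d IH]; first by rewrite addn0.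
by rewrite addnS blockposS (leq_trans IH) ?leq_addr.
Qed.

Hypotheses (rS_gt0 : 0 < rS) (rM_gt0 : 0 < rM).

Lemma wt_gt0 x : 0 < wt x.
Proof. by rewrite /Defs.wt; case: (S x) => //; case: (M x). Qed.

Lemma leq_idx_blockpos k : k <= blockpos k.
Proof.
elim: k => [|k IH] //; rewrite blockposS -addn1.
exact: leq_add IH (wt_gt0 _).
Qed.

Lemma gidx_block k t : blockpos k <= t < blockpos k.+1 -> gidx S M rS rM y t = k.
Proof.
case/andP=> ge_t lt_t; apply/eqP; rewrite eqn_leq; apply/andP; split.
- apply/bigmax_leqP => i bp_i; rewrite leqNgt; apply/negP => lt_ki.
  by move: (leq_trans (leq_blockpos lt_ki) bp_i); rewrite leqNgt lt_t.
- have lt_kt : k < t.+1 by rewrite ltnS (leq_trans (leq_idx_blockpos k)).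
  exact: (@leq_bigmax_cond _ _ _ (Ordinal lt_kt)).
Qed.

Lemma gamma_block k t : blockpos k <= t < blockpos k.+1 -> gamma t = y k.
Proof. by move=> /gidx_block; rewrite /Defs.gamma => ->. Qed.

Lemma sum_gamma_block (g : X -> nat) k :
  \sum_(blockpos k <= t < blockpos k.+1) g (gamma t) = wt (y k) * g (y k).
Proof.
rewrite (@eq_big_nat _ _ _ _ _ _ (fun _ => g (y k))); last first.
  by move=> t /gamma_block ->.
by rewrite sum_nat_const_nat blockposS addKn.
Qed.

Lemma sum_gamma_blockpos (g : X -> nat) K :
  \sum_(0 <= t < blockpos K) g (gamma t) = \sum_(j < K) wt (y j) * g (y j).
Proof.
elim: K => [|K IH]; first by rewrite /Defs.blockpos !big_ord0 big_geq.
rewrite big_ord_recr /= -IH -sum_gamma_block.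
by rewrite -big_cat_nat ?leq_blockpos.
Qed.

Lemma Scount_block_ge k a b : S (y k) -> a <= blockpos k -> blockpos k + rS <= b.+1 ->
  rS <= Scount S M rS rM y a b.
Proof.
move=> Sy_k le_a le_b.
have := sum_gamma_block (fun x => S x : nat) k.
rewrite blockposS /Defs.wt Sy_k muln1 => block_k.
rewrite /Scount -{1}block_k.
exact: leq_sum_nat_subrange le_a (leq_addr _ _) le_b.
Qed.

End Blocks.

Lemma blockpos_double (X : Type) (S M : pred X) rS rM (y : nat -> X) k :
  blockpos S M rS (2 * rM) y k <= 2 * blockpos S M rS rM y k.
Proof.
rewrite /blockpos big_distrr /=; apply: leq_sum => j _.
by rewrite /wt; case: (S (y j)); case: (M (y j)); lia.
Qed.

Lemma gamma11 (X : Type) (S M : pred X) (y : nat -> X) t : gamma S M 1 1 y t = y t.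
Proof.
have blockpos11 k : blockpos S M 1 1 y k = k.
  elim: k => [|k IH]; first by rewrite /blockpos big_ord0.
  by rewrite blockposS IH /wt !if_same addn1.
by apply: gamma_block => //; rewrite !blockpos11 leqnn ltnSn.
Qed.

Lemma doubling_crossing (f : nat -> nat) a :
  f 0 < a -> (forall k, f k.+1 <= 2 * f k) -> (exists k, a <= f k) ->
  exists k, a <= f k < 2 * a.
Proof.
move=> f0_lt f_double /ex_minnP[[|k] fk_ge fk_min]; first by rewrite leqNgt f0_lt in fk_ge.
have fk_lt : f k < a by rewrite ltnNge; apply/negP => /fk_min; rewrite ltnn.
by exists k.+1; rewrite fk_ge (leq_ltn_trans (f_double k)) //; lia.
Qed.

Lemma notS_before_ct (X : Type) (S M : pred X) (y : nat -> X) h c :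
  S (y 0) -> is_ct S y h c -> Scount S M 1 1 y 0 h = 1 ->
  forall j, 0 < j -> j < c -> ~~ S (y j).
Proof.
move=> Sy0 [_ [_ notS_hc]] Scount_h j j_gt0 lt_jc.
have [le_jh|] := leqP j h; last by move=> /notS_hc; apply.
have Ssum_tail : \sum_(1 <= i < h.+1) S (y i) = 0.
  move: Scount_h; rewrite /Scount (@big_ltn _ _ _ 0) // gamma11 Sy0.
  by under eq_bigr do rewrite gamma11; case.
have := leq_sum_nat_subrange (fun i => S (y i)) j_gt0 (leqnSn j) (le_jh : j < h.+1).
by rewrite Ssum_tail big_nat1; case: (S (y j)).
Qed.

Section BeforeCt.
Variables (X : Type) (S M : pred X) (rS rM : nat) (y : nat -> X) (h c : nat).
Hypotheses (S_notM : forall x, S x -> ~~ M x) (rS_gt0 : 0 < rS) (rM_gt0 : 0 < rM).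
Hypotheses (Sy0 : S (y 0)) (My_h : M (y h)) (lt_hc : h < c).
Hypothesis notS_before : forall j, 0 < j -> j < c -> ~~ S (y j).

Local Notation Q := (blockpos S M rS rM y c).

Lemma wt_before_ct j : 0 < j -> j < c -> wt S M rS rM (y j) = if M (y j) then rM else 1.
Proof. by move=> j_gt0 lt_jc; rewrite /wt (negbTE (notS_before j_gt0 lt_jc)). Qed.

Lemma wt_y0 : wt S M rS rM (y 0) = rS.
Proof. by rewrite /wt Sy0. Qed.

Lemma blockpos_ct_ge : rM <= Q.
Proof.
have notSh : ~~ S (y h) by apply/negP => /S_notM; rewrite My_h.
apply: leq_trans (leq_blockpos S M rS rM y lt_hc); rewrite blockposS.
by rewrite /wt (negbTE notSh) My_h leq_addl.
Qed.

Lemma blockpos_ct_le : Q <= rS + c.-1 * rM.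
Proof.
have wt_le j : 0 < j < c -> wt S M rS rM (y j) <= rM.
  by case/andP=> j_gt0 lt_jc; rewrite wt_before_ct //; case: (M (y j)).
by have := leq_sum_ord_tail wt_le; rewrite wt_y0.
Qed.

Lemma nonM_before_ct : \sum_(0 <= t < Q) ~~ M (gamma S M rS rM y t) <= rS + c.-1.
Proof.
rewrite (sum_gamma_blockpos S M y rS_gt0 rM_gt0 (fun x => ~~ M x : nat)).
have nonM_le j : 0 < j < c -> wt S M rS rM (y j) * ~~ M (y j) <= 1.
  by case/andP=> j_gt0 lt_jc; rewrite wt_before_ct //; case: (M (y j)); rewrite ?muln0.
by have := leq_sum_ord_tail nonM_le; rewrite wt_y0 (S_notM Sy0) !muln1.
Qed.

Lemma Mcount_ge n : n < Q -> n.+1 <= Mcount S M rS rM y 0 n + (rS + c.-1).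
Proof.
move=> lt_nQ; apply: (leq_trans _ (leq_add (leqnn _) nonM_before_ct)).
have -> : n.+1 = Mcount S M rS rM y 0 n + \sum_(0 <= t < n.+1) ~~ M (gamma S M rS rM y t).
  rewrite /Mcount -big_split /= (eq_bigr (fun _ => 1)).
    by rewrite sum_nat_const_nat subn0 muln1.
  by move=> t _; case: (M (gamma S M rS rM y t)).
by rewrite leq_add2l leq_sum_nat_subrange.
Qed.

End BeforeCt.

Theorem mainTheorem9 (X : Type) (S M : pred X) (T : nat) (y : nat -> X) :
  (forall x, ~~ (S x && M x)) ->
  2 <= T -> ~~ odd T ->
  S (y 0) ->
  (exists h c, is_ht M y h /\ is_ct S y h c /\ c <= T /\
               Scount S M 1 1 y 0 h = 1) ->
  exists k, k <= up_log 2 (14 * T) /\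
    let rS := T %/ 2 in let rM := 2 ^ k in
    T <= 2 * Mcount S M rS rM y 0 (2 * T) /\
    T <= 4 * Scount S M rS rM y (7 * T) (15 * T).
Proof.
move=> disj T_ge2 T_even Sy0 [h [c [[My_h _] [ct_c [le_cT Scount_h]]]]].
have S_notM x : S x -> ~~ M x by move: (disj x) => /[swap] ->.
have notS := notS_before_ct Sy0 ct_c Scount_h.
have [lt_hc [Sy_c _]] := ct_c.
set t := T %/ 2.
have T_eq : T = 2 * t by rewrite /t mulnC divnK // dvdn2.
have t_gt0 : 0 < t by lia.
have pow2_gt0 k : 0 < 2 ^ k by rewrite expn_gt0.
pose Q k := blockpos S M t (2 ^ k) y c.
have Q_ge k : 2 ^ k <= Q k := blockpos_ct_ge t (2 ^ k) S_notM My_h lt_hc.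
have Q_le k : Q k <= t + c.-1 * 2 ^ k := blockpos_ct_le M t (pow2_gt0 k) Sy0 notS.
have Q0_lt : Q 0 < 7 * T by have := Q_le 0; rewrite expn0 muln1; lia.
have Q_double k : Q k.+1 <= 2 * Q k by rewrite /Q expnS blockpos_double.
have [|k /andP[Qk_ge Qk_lt]] := doubling_crossing Q0_lt Q_double.
  by exists (7 * T); apply: leq_trans (Q_ge (7 * T)); exact/ltnW/ltn_expl.
exists k; split.
  rewrite -[k in k <= _](up_expnK k (ltnSn 1)) leq_up_log //.
  by have := leq_ltn_trans (Q_ge k) Qk_lt; lia.
move=> rS rM; rewrite {}/rS {}/rM; split.
- have lt_2T_Q : 2 * T < Q k by apply: leq_trans Qk_ge; lia.
  have := Mcount_ge S_notM t_gt0 (pow2_gt0 k) Sy0 notS lt_2T_Q; lia.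
- have le_Q_15T : Q k + t <= (15 * T).+1 by lia.
  have := Scount_block_ge t_gt0 (pow2_gt0 k) Sy_c Qk_ge le_Q_15T; lia.
Qed.
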